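(* Let $M$ be a Kokotsakis mesh with planar faces whose central face is a (non-degenerate) triangle $A_1A_2A_3$, in general position in the following sense: for each $i$, $v_i,w_i$ are not collinear and $a_{i-1},a_i$ do not lie in the plane spanned by $v_i,w_i$; the lines $l_1,l_2,l_3$ are pairwise non-parallel, the points $B_1,B_2,B_3$ are not collinear, and $A_i\notin\{B_{i-1},B_i\}$. Then $M$ is not infinitesimally flexible (and hence not flexible).
   Context: A Kokotsakis mesh with central $n$-gon consists of a central face with vertices $A_1,\dots,A_n$ (indices in $\mathbb Z/n\mathbb Z$) and points $V_i,W_i$ such that at each $A_i$ exactly four faces meet, containing the angles $A_{i+1}A_iA_{i-1}$ (central face), $A_{i-1}A_iV_i$, $V_iA_iW_i$, $W_iA_iA_{i+1}$; the face containing $W_iA_iA_{i+1}$ also contains $A_iA_{i+1}V_{i+1}$. Put $a_i=A_{i+1}-A_i$, $v_i=V_i-A_i$, $w_i=W_i-A_i$. $l_i$ is the intersection line of the plane of the central face with the plane through $A_i,V_i,W_i$, and $B_i=l_i\cap l_{i+1}$. Infinitesimally flexible: there is a nonzero infinitesimal isometric deformation with the central face fixed (each face moves infinitesimally rigidly). Flexible: there is a continuous non-constant family of meshes starting at $M$, with the central face fixed, in which each face stays congruent to its initial position. *)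

From HB Require Import structures.
From mathcomp Require Import all_boot all_order all_algebra.
Set Implicit Arguments. Unset Strict Implicit. Unset Printing Implicit Defensive.
Import Order.TTheory GRing.Theory Num.Theory.
Local Open Scope ring_scope.

Section Geom.
Variable R : realFieldType.
Notation vec := 'rV[R]_3.

Definition dot (u v : vec) : R := \sum_(k < 3) u 0 k * v 0 k.

Definition cross (u v : vec) : vec :=
  let x i := u 0 (inord i) in let y i := v 0 (inord i) in
  \row_(k < 3) [:: x 1%N * y 2%N - x 2%N * y 1%N;
                   x 2%N * y 0%N - x 0%N * y 2%N;
                   x 0%N * y 1%N - x 1%N * y 0%N]`_k.

Definition rigid_vel (om t p : vec) : vec := cross om p + t.

(* A mesh with central triangle: points A i, V i, W i, i : 'I_3 (indices mod 3:
   succ = ordS, pred = ord_pred). Vectors a_i, v_i, w_i. *)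
Definition a_ (A : 'I_3 -> vec) (i : 'I_3) : vec := A (ordS i) - A i.
Definition v_ (A V : 'I_3 -> vec) (i : 'I_3) : vec := V i - A i.
Definition w_ (A W : 'I_3 -> vec) (i : 'I_3) : vec := W i - A i.

Definition central_normal (A : 'I_3 -> vec) : vec :=
  cross (A (ordS 0) - A 0) (A (ord_pred 0) - A 0).

Definition corner_normal (A V W : 'I_3 -> vec) (i : 'I_3) : vec :=
  cross (v_ A V i) (w_ A W i).

Definition on_l (A V W : 'I_3 -> vec) (i : 'I_3) (P : vec) : Prop :=
  dot (central_normal A) (P - A i) = 0 /\ dot (corner_normal A V W i) (P - A i) = 0.

Definition l_dir (A V W : 'I_3 -> vec) (i : 'I_3) : vec :=
  cross (central_normal A) (corner_normal A V W i).

Definition collinear3 (P Q S : vec) : Prop := cross (Q - P) (S - P) = 0.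

(* Kokotsakis mesh with central triangle and planar faces: the side face
   through W_i, A_i, A_{i+1}, V_{i+1} is planar (the central face and the
   corner faces V_i A_i W_i are planar automatically). *)
Definition planar_faces (A V W : 'I_3 -> vec) : Prop :=
  forall i : 'I_3, dot (cross (a_ A i) (w_ A W i)) (V (ordS i) - A i) = 0.

(* Faces: central face A_1A_2A_3,
   corner faces (A_i, V_i, W_i), side faces (A_i, A_{i+1}, W_i, V_{i+1}). *)
Definition inf_flexible (A V W : 'I_3 -> vec) : Prop :=
  exists (dA dV dW : 'I_3 -> vec),
    (forall i, dA i = 0) /\
    (exists i, dV i <> 0 \/ dW i <> 0) /\
    (forall i : 'I_3,
       exists om t : vec,
         rigid_vel om t (A i) = dA i /\ rigid_vel om t (V i) = dV i /\
         rigid_vel om t (W i) = dW i) /\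
    (forall i : 'I_3,
       exists om t : vec,
         rigid_vel om t (A i) = dA i /\ rigid_vel om t (A (ordS i)) = dA (ordS i) /\
         rigid_vel om t (W i) = dW i /\ rigid_vel om t (V (ordS i)) = dV (ordS i)).

End Geom.

From HB Require Import structures.
From mathcomp Require Import all_boot all_order all_algebra.
From mathcomp Require Import ring lra.
Set Implicit Arguments. Unset Strict Implicit. Unset Printing Implicit Defensive.
Import Order.TTheory GRing.Theory Num.Theory.
Local Open Scope ring_scope.

(* With the central face fixed, side face i can only rotate about its edge a_i,
   with some angular speed lam_i, and corner face i only about A_i.  The corner
   face shares V_i with side face i-1 and W_i with side face i; comparing the
   two rotations along the corner normal n_i = v_i x w_i gives
   lam_(i-1) <n_i, a_(i-1)> = lam_i <n_i, a_i>.  The coefficients being nonzero,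
   a nontrivial flex has all lam_i nonzero, and the three relations are then
   exactly Ceva's condition for the lines l_i, which pass through A_i, to be
   concurrent in the central plane: B_1 = B_2 = B_3, so the B_i are collinear. *)

Lemma ord3P (k : 'I_3) : k = 0 \/ k = 1 \/ k = 2.
Proof.
by case: k => [[|[|[|//]]] ?]; [left | right; left | right; right]; apply/val_inj.
Qed.

Lemma ordS_I3 : (ordS 0 = 1 :> 'I_3) * (ordS 1 = 2 :> 'I_3) * (ordS 2 = 0 :> 'I_3).
Proof. by do !split; apply/val_inj. Qed.

Lemma ord_pred_I3 :
  (ord_pred 0 = 2 :> 'I_3) * (ord_pred 1 = 0 :> 'I_3) * (ord_pred 2 = 1 :> 'I_3).
Proof. by do !split; apply/val_inj. Qed.

Section VectorAlgebra.
Variable R : realFieldType.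
Implicit Types (a b c d u v w x : 'rV[R]_3) (k : R).

Lemma dotE u v : dot u v = u 0 0 * v 0 0 + u 0 1 * v 0 1 + u 0 2 * v 0 2.
Proof.
rewrite /dot !big_ord_recl big_ord0 addr0 addrA.
by congr (_ * _ + _ * _ + _ * _); congr (_ _ _); apply/val_inj.
Qed.

Lemma crossE u v : cross u v =
  \row_(k < 3) [:: u 0 1 * v 0 2 - u 0 2 * v 0 1;
                   u 0 2 * v 0 0 - u 0 0 * v 0 2;
                   u 0 0 * v 0 1 - u 0 1 * v 0 0]`_k.
Proof.
have i0 : inord 0 = 0 :> 'I_3 by apply/val_inj; rewrite /= inordK.
have i1 : inord 1 = 1 :> 'I_3 by apply/val_inj; rewrite /= inordK.
have i2 : inord 2 = 2 :> 'I_3 by apply/val_inj; rewrite /= inordK.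
by rewrite /cross i0 i1 i2.
Qed.

Ltac vec_ring :=
  let k := fresh "k" in
  try (apply/rowP => k; case: (ord3P k) => [->|[->|->]]);
  rewrite ?dotE ?crossE ?mxE /= ?dotE ?crossE ?mxE /=; ring.

Lemma crossBr u v w : cross u (v - w) = cross u v - cross u w.
Proof. vec_ring. Qed.

Lemma dot_cross_cycle x v w : dot x (cross v w) = dot (cross x v) w.
Proof. vec_ring. Qed.

Lemma cross_basis_decomp x v w : dot (cross v w) (cross v w) *: x =
  dot (cross x w) (cross v w) *: v + dot (cross v x) (cross v w) *: w
  + dot (cross v w) x *: cross v w.
Proof. vec_ring. Qed.

Lemma dot_sub_via u (P Q S : 'rV[R]_3) : dot u (P - Q) = dot u (P - S) - dot u (Q - S).
Proof. vec_ring. Qed.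

Lemma dotC u v : dot u v = dot v u.
Proof. vec_ring. Qed.

Lemma dot_cross_anticycle x v w : dot x (cross v w) = - dot (cross x w) v.
Proof. vec_ring. Qed.

Lemma cross0l u : cross 0 u = 0.
Proof. vec_ring. Qed.

Lemma dotr0 u : dot u 0 = 0.
Proof. vec_ring. Qed.

Lemma dotZr k u v : dot u (k *: v) = k * dot u v.
Proof. vec_ring. Qed.

Lemma dot_subC u (P Q : 'rV[R]_3) : dot u (P - Q) = - dot u (Q - P).
Proof. vec_ring. Qed.

Lemma cross_self_dotr u v : dot (cross u v) v = 0.
Proof. vec_ring. Qed.

Lemma dot_self_eq0 u : (dot u u == 0) = (u == 0).
Proof.
apply/eqP/eqP => [|->]; last by vec_ring.
rewrite dotE => h.
have h0 : u 0 0 = 0 by nra.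
have h1 : u 0 1 = 0 by nra.
have h2 : u 0 2 = 0 by nra.
by apply/rowP => k; case: (ord3P k) => [->|[->|->]]; rewrite mxE.
Qed.

Lemma cross_eq0_scale u v : v != 0 -> cross u v = 0 -> exists k, u = k *: v.
Proof.
move=> nz_v uv0; rewrite -dot_self_eq0 in nz_v.
have bac : cross v (cross u v) = dot v v *: u - dot u v *: v by vec_ring.
exists (dot u v / dot v v).
rewrite uv0 (_ : cross v 0 = 0) in bac; last by vec_ring.
move/eqP: bac; rewrite eq_sym subr_eq0 => /eqP /(congr1 ( *:%R (dot v v)^-1)).
by rewrite !scalerA mulVf // scale1r mulrC.
Qed.

Lemma eq0_of_dot_cross3 d a b c : dot a (cross b c) != 0 ->
  dot a d = 0 -> dot b d = 0 -> dot c d = 0 -> d = 0.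
Proof.
move=> nz da db dc.
have cramer : dot a (cross b c) *: d =
  dot a d *: cross b c + dot b d *: cross c a + dot c d *: cross a b by vec_ring.
move: cramer; rewrite da db dc !scale0r !addr0 => /eqP.
by rewrite scaler_eq0 (negbTE nz) => /eqP.
Qed.

Lemma cross_cross_common a b c :
  cross (cross a b) (cross a c) = dot a (cross b c) *: a.
Proof. vec_ring. Qed.

Lemma plane_barycentric (P Q S T : 'rV[R]_3) :
  cross (S - Q) (T - Q) != 0 -> dot (cross (S - Q) (T - Q)) (P - Q) = 0 ->
  exists b0 b1 b2 : R, b0 + b1 + b2 = 1 /\ P = b0 *: Q + b1 *: S + b2 *: T.
Proof.
set N := cross _ _ => nz_N PN.
have nz_D : dot N N != 0 by rewrite dot_self_eq0.
have := cross_basis_decomp (P - Q) (S - Q) (T - Q); rewrite -/N PN scale0r addr0.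
set s := dot (cross (P - Q) (T - Q)) N; set t := dot (cross (S - Q) (P - Q)) N.
move=> dec.
exists (1 - s / dot N N - t / dot N N), (s / dot N N), (t / dot N N).
split; first by ring.
transitivity (Q + (dot N N)^-1 *: (dot N N *: (P - Q))).
  by rewrite scalerA mulVf // scale1r addrC subrK.
rewrite dec; vec_ring.
Qed.

Lemma dot_affine_comb u (b0 b1 b2 : R) (P Q S T : 'rV[R]_3) : b0 + b1 + b2 = 1 ->
  dot u (b0 *: P + b1 *: Q + b2 *: S - T) =
  b0 * dot u (P - T) + b1 * dot u (Q - T) + b2 * dot u (S - T).
Proof.
move=> hb; have -> : b0 = 1 - b1 - b2 by rewrite -hb; ring.
vec_ring.
Qed.

End VectorAlgebra.

Section RigidMotions.
Variable R : realFieldType.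
Implicit Types (om r t v w p Q S : 'rV[R]_3).

Lemma rigid_vel_about om t Q p :
  rigid_vel om t Q = 0 -> rigid_vel om t p = cross om (p - Q).
Proof.
by rewrite /rigid_vel crossBr => /eqP; rewrite addr_eq0 => /eqP ->; rewrite opprK.
Qed.

Lemma rigid_vel_axis om t Q S : S - Q != 0 ->
  rigid_vel om t Q = 0 -> rigid_vel om t S = 0 -> exists k, om = k *: (S - Q).
Proof.
move=> SQ vQ vS; apply: cross_eq0_scale => //.
by rewrite -(rigid_vel_about S vQ).
Qed.

Lemma rotations_normal_agree om r r' v w :
  cross om v = cross r v -> cross om w = cross r' w ->
  dot (cross v w) r = dot (cross v w) r'.
Proof.
move=> hv hw; rewrite dotC [RHS]dotC dot_cross_cycle -hv -dot_cross_cycle.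
by rewrite [RHS]dot_cross_anticycle -hw -dot_cross_anticycle.
Qed.

End RigidMotions.

(* Ceva's condition in coordinates: F_ij is the value at the vertex A_j of an
   affine form vanishing on the cevian l_i through A_i (so F_ii = 0), and
   (b0, b1, b2) are barycentric coordinates of a point on l_0 and l_1. *)
Lemma ceva_scalar (R : fieldType) (b0 b1 b2 l0 l1 l2 F01 F02 F10 F12 F20 F21 : R) :
  F01 != 0 -> F12 != 0 -> l2 != 0 ->
  l2 * F02 = - l0 * F01 -> l0 * F10 = - l1 * F12 -> l1 * F21 = - l2 * F20 ->
  b1 * F01 + b2 * F02 = 0 -> b0 * F10 + b2 * F12 = 0 ->
  b0 * F20 + b1 * F21 = 0.
Proof.
move=> nz01 nz12 nz2 r0 r1 r2 on0 on1.
have e20 : b2 * l0 = b1 * l2.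
  apply/eqP; rewrite -subr_eq0; apply/eqP/(mulfI nz01); rewrite mulr0.
  transitivity (b2 * (l2 * F02 - - l0 * F01) - l2 * (b1 * F01 + b2 * F02)).
    by ring.
  by rewrite r0 on0 subrr !mulr0 subr0.
have e21 : b2 * l0 = b0 * l1.
  apply/eqP; rewrite -subr_eq0; apply/eqP/(mulfI nz12); rewrite mulr0.
  transitivity (l0 * (b0 * F10 + b2 * F12) - b0 * (l0 * F10 - - l1 * F12)).
    by ring.
  by rewrite r1 on1 subrr !mulr0 subr0.
apply/(mulfI nz2); rewrite mulr0.
transitivity (b0 * (l1 * F21 - - l2 * F20) + F21 * (b2 * l0 - b0 * l1 - (b2 * l0 - b1 * l2))).
  by ring.
by rewrite r2 -e21 -e20 !subrr !mulr0 addr0.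
Qed.

Section Mesh.
Variables (R : realFieldType) (A V W : 'I_3 -> 'rV[R]_3).
Notation n_ := (corner_normal A V W).

Lemma central_normalE : central_normal A = cross (A 1 - A 0) (A 2 - A 0).
Proof. by rewrite /central_normal ordS_I3 ord_pred_I3. Qed.

Lemma inf_flexible_side_speeds : (forall i, a_ A i != 0) -> inf_flexible A V W ->
  exists2 lam : 'I_3 -> R, (exists i, lam i != 0) &
  (forall i, lam (ord_pred i) * dot (n_ i) (a_ A (ord_pred i)) = lam i * dot (n_ i) (a_ A i)).
Proof.
move=> nz_a [dA [dV [dW [dA0 [[j nz_j] [corner side]]]]]].
have side_rot i : exists k, dW i = cross (k *: a_ A i) (w_ A W i) /\
                            dV (ordS i) = cross (k *: a_ A i) (v_ A V (ordS i)).
  have [om [t [vA [vA' [vW vV]]]]] := side i; rewrite !dA0 in vA vA'.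
  have [k om_k] := rigid_vel_axis (nz_a i) vA vA'.
  exists k; rewrite -vW -vV (rigid_vel_about _ vA) (rigid_vel_about _ vA') om_k.
  by split.
have [lam lamP] := fin_all_exists side_rot.
exists lam.
  case: nz_j => [nzV | nzW].
    exists (ord_pred j); apply/eqP => lam0; apply: nzV.
    by rewrite -[j]ord_predK (lamP _).2 lam0 scale0r cross0l.
  exists j; apply/eqP => lam0; apply: nzW.
  by rewrite (lamP j).1 lam0 scale0r cross0l.
move=> i; have [om [t [vA [vV vW]]]] := corner i; rewrite dA0 in vA.
rewrite -!dotZr; apply: (rotations_normal_agree (om := om)).
  have := (lamP (ord_pred i)).2; rewrite ord_predK => <-.
  by rewrite -vV (rigid_vel_about _ vA).
by rewrite -(lamP i).1 -vW (rigid_vel_about _ vA).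
Qed.

Section SideSpeeds.
Variable lam : 'I_3 -> R.
Hypothesis nz_n : forall i,
  dot (n_ i) (a_ A (ord_pred i)) != 0 /\ dot (n_ i) (a_ A i) != 0.
Hypothesis rel : forall i,
  lam (ord_pred i) * dot (n_ i) (a_ A (ord_pred i)) = lam i * dot (n_ i) (a_ A i).

Lemma side_speeds_nonzero : (exists i, lam i != 0) -> forall i, lam i != 0.
Proof.
have step i : (lam (ord_pred i) == 0) = (lam i == 0).
  have [nz_p nz_s] := nz_n i.
  apply/eqP/eqP => lam0; move: (rel i); rewrite lam0 mul0r.
    by move/esym/eqP; rewrite mulf_eq0 (negbTE nz_s) orbF => /eqP.
  by move/eqP; rewrite mulf_eq0 (negbTE nz_p) orbF => /eqP.
have all_eq i : (lam i == 0) = (lam 0 == 0).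
  case: (ord3P i) => [-> // | [-> | ->]].
    by rewrite -step ord_pred_I3.
  by rewrite -step ord_pred_I3 -step ord_pred_I3.
by case=> j nz_j i; rewrite all_eq -(all_eq j).
Qed.

Lemma l_concurrent P : central_normal A != 0 -> lam 2 != 0 ->
  on_l A V W 0 P -> on_l A V W 1 P -> on_l A V W 2 P.
Proof.
move=> nz_N nz_l2 [P0 f0] [_ f1]; rewrite central_normalE in nz_N P0.
have rel' i : lam (ord_pred i) * dot (n_ i) (A (ord_pred i) - A i) =
              - lam i * dot (n_ i) (A (ordS i) - A i).
  by rewrite dot_subC mulrN mulNr; congr (- _); have := rel i; rewrite /a_ ord_predK.
split.
  by rewrite central_normalE (dot_sub_via _ _ _ (A 0)) P0 cross_self_dotr subrr.
move: f0 f1 (rel' 0) (rel' 1) (rel' 2); rewrite !ordS_I3 !ord_pred_I3.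
have [b0 [b1 [b2 [hb ->]]]] := plane_barycentric nz_N P0.
rewrite /on_l !dot_affine_comb // !subrr !dotr0 !mulr0 add0r !addr0 => f0 f1 r0 r1 r2.
apply: (ceva_scalar _ _ _ r0 r1 r2 f0 f1) => //.
  by have := (nz_n 0).2; rewrite /a_ ordS_I3.
by have := (nz_n 1).2; rewrite /a_ ordS_I3.
Qed.

End SideSpeeds.

Lemma on_l_inj i j P Q : cross (l_dir A V W i) (l_dir A V W j) <> 0 ->
  on_l A V W i P -> on_l A V W j P -> on_l A V W i Q -> on_l A V W j Q -> P = Q.
Proof.
rewrite /l_dir cross_cross_common => nz [Pi Pi'] [Pj Pj'] [Qi Qi'] [Qj Qj'].
apply/eqP; rewrite -subr_eq0; apply/eqP.
apply: (eq0_of_dot_cross3 (a := central_normal A) (b := n_ i) (c := n_ j)).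
- by apply/eqP => h; apply: nz; rewrite h scale0r.
- by rewrite (dot_sub_via _ _ _ (A i)) Pi Qi subrr.
- by rewrite (dot_sub_via _ _ _ (A i)) Pi' Qi' subrr.
- by rewrite (dot_sub_via _ _ _ (A j)) Pj' Qj' subrr.
Qed.

End Mesh.

Theorem corollary6 (R : realFieldType) (A V W B : 'I_3 -> 'rV[R]_3) :
  planar_faces A V W ->
  ~ collinear3 (A 0) (A (ordS 0)) (A (ord_pred 0)) ->
  (forall i, cross (v_ A V i) (w_ A W i) <> 0) ->
  (forall i, dot (cross (v_ A V i) (w_ A W i)) (a_ A (ord_pred i)) <> 0 /\
             dot (cross (v_ A V i) (w_ A W i)) (a_ A i) <> 0) ->
  (forall i j, i <> j -> cross (l_dir A V W i) (l_dir A V W j) <> 0) ->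
  (forall i, on_l A V W i (B i) /\ on_l A V W (ordS i) (B i)) ->
  ~ collinear3 (B 0) (B (ordS 0)) (B (ord_pred 0)) ->
  (forall i, A i <> B (ord_pred i) /\ A i <> B i) ->
  ~ inf_flexible A V W.
Proof.
move=> _ nc_A _ nz_coef npar onB nc_B _ flex.
have nz_n i : dot (corner_normal A V W i) (a_ A (ord_pred i)) != 0 /\
              dot (corner_normal A V W i) (a_ A i) != 0.
  by have [? ?] := nz_coef i; split; apply/eqP.
have nz_a i : a_ A i != 0.
  by apply: contraNneq (nz_n i).2 => ->; rewrite dotr0.
have [lam nz_lam rel] := inf_flexible_side_speeds nz_a flex.
have [B0_l0 B0_l1] := onB 0; have [B1_l1 B1_l2] := onB 1; have [B2_l2 B2_l0] := onB 2.
rewrite !ordS_I3 in B0_l1 B1_l2 B2_l0.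
have B0_l2 : on_l A V W 2 (B 0).
  apply: (l_concurrent nz_n rel) => //; first by apply/eqP.
  exact: side_speeds_nonzero nz_n rel nz_lam 2.
have B01 : B 0 = B 1 by apply: (on_l_inj (npar 1 2 _)).
have B02 : B 0 = B 2 by apply: (on_l_inj (npar 2 0 _)).
by apply: nc_B; rewrite ordS_I3 ord_pred_I3 /collinear3 -B01 -B02 subrr cross0l.
Qed.
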